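(* Let $\mathcal{H}_A$ be a two-dimensional complex Hilbert space and $\mathcal{H}_B,\mathcal{H}_C$ finite-dimensional complex Hilbert spaces. For every pure state $|\psi\rangle\langle\psi|$ on $\mathcal{H}_A\otimes\mathcal{H}_B\otimes\mathcal{H}_C$, $$L_{A:CB}-L_{AC:B}\le L_{AB:C},$$ where $L_{A:CB}$, $L_{AC:B}$, $L_{AB:C}$ are the logarithmic negativities of the state with respect to the bipartitions $A|BC$, $AC|B$ and $AB|C$ respectively.
   Context: For a bipartite state $\rho_{XY}$ on $\mathcal{H}_X\otimes\mathcal{H}_Y$, the logarithmic negativity is $L_{X:Y}=\log_2\|\rho_{XY}^{T_X}\|_1=\log_2(2N_{X:Y}+1)$, where $\rho_{XY}^{T_X}$ is the partial transpose with respect to $X$, $\|\sigma\|_1=\mathrm{Tr}\sqrt{\sigma^\dagger\sigma}$ is the trace norm, and $N_{X:Y}=\frac{\|\rho_{XY}^{T_X}\|_1-1}{2}$ is the negativity. *)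

From HB Require Import structures.
From mathcomp Require Import all_boot all_order all_algebra.
From mathcomp Require Import sesquilinear spectral.
From mathcomp Require Import complex.
From mathcomp Require Import reals exp.

Set Implicit Arguments.
Unset Strict Implicit.
Unset Printing Implicit Defensive.

Import Order.TTheory GRing.Theory Num.Theory.
Local Open Scope ring_scope.

Section QuantumDefs.
Variable R : realType.
Local Notation C := R[i].

Definition psd_sqrt n (A : 'M[C]_n) : 'M[C]_n :=
  invmx (spectralmx A) *m diag_mx (map_mx sqrtC (spectral_diag A))
    *m spectralmx A.

Definition trace_norm n (S : 'M[C]_n) : R :=
  complex.Re (\tr (psd_sqrt ((map_mx (fun z : C => z^*) S^T) *m S))).

(* Operators on the finite-dimensional Hilbert space C^T, T a finite type
   (basis indexed by T), represented as #|T| x #|T| matrices. *)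
Definition entry (T : finType) (A : 'M[C]_#|{: T}|) (x y : T) : C :=
  A (enum_rank x) (enum_rank y).

Definition mx_of (T : finType) (f : T -> T -> C) : 'M[C]_#|{: T}| :=
  \matrix_(i, j) f (enum_val i) (enum_val j).

Definition pure_dm (T : finType) (psi : T -> C) : 'M[C]_#|{: T}| :=
  mx_of (fun x y => psi x * (psi y)^*).

Definition ptranspose_fst (X Y : finType) (rho : 'M[C]_#|{: X * Y}|)
  : 'M[C]_#|{: X * Y}| :=
  mx_of (fun p q : X * Y => entry rho (q.1, p.2) (p.1, q.2)).

Definition log2 (x : R) : R := ln x / ln 2.

Definition log_negativity (X Y : finType) (rho : 'M[C]_#|{: X * Y}|) : R :=
  log2 (trace_norm (ptranspose_fst rho)).

End QuantumDefs.

From HB Require Import structures.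
From mathcomp Require Import all_boot all_order all_algebra.
From mathcomp Require Import sesquilinear spectral.
From mathcomp Require Import complex.
From mathcomp Require Import reals exp.
From mathcomp Require Import ring lra.

Set Implicit Arguments.
Unset Strict Implicit.
Unset Printing Implicit Defensive.

Import Order.TTheory GRing.Theory Num.Theory.
Local Open Scope ring_scope.
Local Open Scope sesquilinear_scope.

(* For a pure state with amplitudes M on H_X (x) H_Y, the partial transpose K
   of |M><M| satisfies K^* K = rho_X^T (x) rho_Y, so ||K||_1 = (sum_i sqrt a_i)
   (sum_j sqrt b_j) with a, b the spectra of the two marginals, which share their
   purity P.  For a probability vector s of purity p, (sum_i sqrt s_i)^2 is at
   least 1 + sqrt (2 (1 - p)), with equality when s has at most two nonzero
   entries.  Since A is a qubit, both marginals of the cut A|BC have rank at most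
   2, so ||rho^{T_A}||_1 equals this bound for P_A, while the other two trace
   norms are at least the bounds for P_B and P_C.  The claim thus reduces to
   P_B + P_C <= 1 + P_A, which is the positivity of the squared norm of
   (1 - F_B)(1 - F_C)(psi (x) psi), F_B and F_C swapping the B and C factors of
   the two copies. *)

Lemma sum_enum_val (V : nmodType) (T : finType) (F : T -> V) :
  \sum_(i < #|{: T}|) F (enum_val i) = \sum_x F x.
Proof. by rewrite -(big_enum_val (A := {: T})); apply: eq_bigl => x; rewrite inE. Qed.

Lemma sum_enum_rank (V : nmodType) (T : finType) (G : 'I_#|{: T}| -> V) :
  \sum_x G (enum_rank x) = \sum_i G i.
Proof. by rewrite -sum_enum_val; apply: eq_bigr => i _; rewrite enum_valK. Qed.

Section IndexedMatrices.
Variables (R : realType) (T : finType).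
Local Notation C := R[i].
Implicit Types (f g : T -> T -> C) (A B : 'M[C]_#|{: T}|).

Lemma entry_mx_of f x y : entry (mx_of f) x y = f x y.
Proof. by rewrite /entry /mx_of mxE !enum_rankK. Qed.

Lemma mx_of_entry A : mx_of (entry A) = A.
Proof. by apply/matrixP => i j; rewrite /mx_of /entry mxE !enum_valK. Qed.

Lemma eq_mx_of f g : (forall x y, f x y = g x y) -> mx_of f = mx_of g.
Proof. by move=> fg; apply/matrixP => i j; rewrite !mxE fg. Qed.

Lemma mul_mx_of f g : mx_of f *m mx_of g = mx_of (fun x z => \sum_y f x y * g y z).
Proof.
apply/matrixP => i j; rewrite mxE [in RHS]mxE -[in RHS]sum_enum_val.
by apply: eq_bigr => k _; rewrite !mxE.
Qed.

Lemma adj_mx_of f : (mx_of f) ^t* = mx_of (fun x y => (f y x)^*).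
Proof. by apply/matrixP => i j; rewrite !mxE. Qed.

Lemma mxtrace_mx_of f : \tr (mx_of f) = \sum_x f x x.
Proof. by rewrite -sum_enum_val; apply: eq_bigr => i _; rewrite mxE. Qed.

Lemma entry_mulmx A B x z : entry (A *m B) x z = \sum_y entry A x y * entry B y z.
Proof. by rewrite -{1}(mx_of_entry A) -{1}(mx_of_entry B) mul_mx_of entry_mx_of. Qed.

Lemma mxtrace_mulmx_entry A B : \tr (A *m B) = \sum_x \sum_y entry A x y * entry B y x.
Proof. by rewrite -(mx_of_entry A) -(mx_of_entry B) mul_mx_of mxtrace_mx_of !mx_of_entry. Qed.

Lemma entry1mx x y : entry (1%:M : 'M[C]_#|{: T}|) x y = (x == y)%:R.
Proof. by rewrite /entry mxE (inj_eq enum_rank_inj). Qed.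

Lemma mx_of_eq1 : mx_of (fun x y => (x == y)%:R) = 1%:M :> 'M[C]_#|{: T}|.
Proof. by apply/matrixP => i j; rewrite !mxE (inj_eq enum_val_inj). Qed.

Lemma entry_diag_mx (d : 'rV[C]_#|{: T}|) x y :
  entry (diag_mx d) x y = (x == y)%:R * d 0 (enum_rank x).
Proof.
rewrite /entry mxE (inj_eq enum_rank_inj).
by case: eqP => [->|_]; rewrite ?mulr1n ?mul1r ?mulr0n ?mul0r.
Qed.

Lemma mx_of_diag (e : T -> C) :
  mx_of (fun x y => (x == y)%:R * e x) = diag_mx (\row_i e (enum_val i)).
Proof.
apply/matrixP => i j; rewrite !mxE (inj_eq enum_val_inj).
by case: eqP => [->|_]; rewrite ?mul1r ?mulr1n ?mul0r ?mulr0n.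
Qed.

End IndexedMatrices.

Section Kronecker.
Variables (R : realType) (X Y : finType).
Local Notation C := R[i].

Definition kronmx (A : 'M[C]_#|{: X}|) (B : 'M[C]_#|{: Y}|) : 'M[C]_#|{: X * Y}| :=
  mx_of (fun p q : X * Y => entry A p.1 q.1 * entry B p.2 q.2).

Lemma mul_kronmx (A A' : 'M[C]_#|{: X}|) (B B' : 'M[C]_#|{: Y}|) :
  kronmx A B *m kronmx A' B' = kronmx (A *m A') (B *m B').
Proof.
rewrite mul_mx_of; apply: eq_mx_of => p q; rewrite !entry_mulmx big_distrlr /= pair_bigA.
by apply: eq_bigr => r _; ring.
Qed.

Lemma kronmx1 : kronmx 1%:M 1%:M = 1%:M.
Proof.
rewrite -[RHS]mx_of_eq1; apply: eq_mx_of => p q.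
by rewrite !entry1mx -natrM mulnb -xpair_eqE -!surjective_pairing.
Qed.

Lemma kronmx_diag (a : 'rV[C]_#|{: X}|) (b : 'rV[C]_#|{: Y}|) :
  kronmx (diag_mx a) (diag_mx b) =
  diag_mx (\row_i (a 0 (enum_rank (enum_val i).1) * b 0 (enum_rank (enum_val i).2))).
Proof.
rewrite -(mx_of_diag (fun p : X * Y => a 0 (enum_rank p.1) * b 0 (enum_rank p.2))).
apply: eq_mx_of => -[x y] [x' y']; rewrite !entry_diag_mx xpair_eqE /=.
by case: eqP => _; case: eqP => _; rewrite /= ?mul1r ?mul0r ?mulr0.
Qed.

End Kronecker.

Section Similarity.
Variable F : fieldType.

Lemma char_poly_similar n (A P P' : 'M[F]_n) : P' *m P = 1%:M ->
  char_poly (P' *m A *m P) = char_poly A.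
Proof.
move=> P'P.
have charM : char_poly_mx (P' *m A *m P) =
   map_mx polyC P' *m char_poly_mx A *m map_mx polyC P.
  rewrite /char_poly_mx mulmxBr mulmxBl -!map_mxM; congr (_ - _).
  by rewrite -mulmxA -scalar_mxC mulmxA -map_mxM P'P map_mx1 mul1mx.
rewrite /char_poly charM !det_mulmx mulrC mulrA -det_mulmx -map_mxM.
by rewrite (mulmx1C P'P) map_mx1 det1 mul1r.
Qed.

Lemma char_poly_diag_mx n (d : 'rV[F]_n) :
  char_poly (diag_mx d) = \prod_(i < n) ('X - (d 0 i)%:P).
Proof.
rewrite char_poly_trig ?diag_mx_is_trig //.
by apply: eq_bigr => i _; rewrite mxE eqxx mulr1n.
Qed.

Lemma sum_similar_diag (V : nmodType) n (d e : 'rV[F]_n) (P P' Q Q' : 'M[F]_n)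
    (f : F -> V) :
  P' *m P = 1%:M -> Q' *m Q = 1%:M ->
  P' *m diag_mx d *m P = Q' *m diag_mx e *m Q ->
  \sum_i f (d 0 i) = \sum_i f (e 0 i).
Proof.
move=> hP hQ de.
have : perm_eq [seq d 0 i | i <- enum 'I_n] [seq e 0 i | i <- enum 'I_n].
  apply: prod_XsubC_eq; have := congr1 char_poly de.
  by rewrite !char_poly_similar // !char_poly_diag_mx !big_map.
move=> de_perm.
have := perm_big (op := +%R) (x := 0) (P := xpredT) (F := f) _ de_perm.
by rewrite !big_map.
Qed.

Lemma card_support_le_rank n (d : 'rV[F]_n) :
  (#|[set i | d 0%R i != 0%R]| <= \rank (diag_mx d))%N.
Proof.
set S := [set i | d 0 i != 0].
(* E *m diag_mx d *m E^T is the (invertible) restriction of diag_mx d to S. *)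
pose E : 'M[F]_(#|S|, n) := \matrix_(a, j) (enum_val a == j)%:R.
have ES : E *m diag_mx d *m E^T = diag_mx (\row_a d 0 (enum_val a)).
  apply/matrixP => a b; rewrite mul_mx_diag !mxE.
  rewrite (bigD1 (enum_val a)) //= big1 ?addr0; last first.
    by move=> j /negPf hj; rewrite !mxE eq_sym hj mul0r mul0r.
  rewrite !mxE eqxx mul1r (inj_eq enum_val_inj) eq_sym.
  by case: (a == b); rewrite ?mulr1n ?mulr0n ?mulr1 ?mulr0.
have ES_unit : E *m diag_mx d *m E^T \in unitmx.
  rewrite ES unitmxE det_diag unitfE; apply/prodf_neq0 => a _.
  by rewrite mxE; have := enum_valP a; rewrite inE.
rewrite -(mxrank_unit ES_unit) (leq_trans (mxrankM_maxl _ _)) //.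
exact: mxrankM_maxr.
Qed.

End Similarity.

Section NormalMatrices.
Variable C : numClosedFieldType.

Lemma mxtrace_similar n (P B : 'M[C]_n) : P \in unitmx -> \tr (P *m B *m invmx P) = \tr B.
Proof. by move=> PU; rewrite mxtrace_mulC mulmxA mulVmx // mul1mx. Qed.

Definition gram m n (N : 'M[C]_(m, n)) := N *m N ^t*.

Lemma gram_normalmx m n (N : 'M[C]_(m, n)) : gram N \is normalmx.
Proof. by apply/normalmxP; rewrite /gram trmx_mul map_mxM trmxCK. Qed.

Variables (n : nat) (A : 'M[C]_n).
Hypothesis A_normal : A \is normalmx.

Lemma diag_spectral_diag :
  diag_mx (spectral_diag A) = spectralmx A *m A *m invmx (spectralmx A).
Proof.
have /orthomx_spectralP eA := A_normal; have PU := spectral_unit A.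
set P := spectralmx A in eA PU *; set d := spectral_diag A in eA *.
by rewrite [in RHS]eA !mulmxA mulmxV // mul1mx -mulmxA mulmxV // mulmx1.
Qed.

Lemma sum_spectral_diag : \sum_i spectral_diag A 0 i = \tr A.
Proof. by rewrite -mxtrace_diag diag_spectral_diag mxtrace_similar ?spectral_unit. Qed.

Lemma sum_spectral_diag_sqr : \sum_i spectral_diag A 0 i ^+ 2 = \tr (A *m A).
Proof.
have PU := spectral_unit A.
transitivity (\tr (diag_mx (spectral_diag A) *m diag_mx (spectral_diag A))).
  by rewrite mulmx_diag mxtrace_diag; apply: eq_bigr => i _; rewrite mxE expr2.
by rewrite diag_spectral_diag !mulmxA mulmxKV // -[_ *m A *m A]mulmxA mxtrace_similar.
Qed.

Lemma card_spectral_support : (#|[set i | spectral_diag A 0%R i != 0%R]| <= \rank A)%N.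
Proof.
rewrite (leq_trans (card_support_le_rank _)) // diag_spectral_diag.
by rewrite (leq_trans (mxrankM_maxl _ _)) // mxrankM_maxr.
Qed.

End NormalMatrices.

Lemma spectral_diag_gram_ge0 (C : numClosedFieldType) m n (N : 'M[C]_(m, n)) i :
  0 <= spectral_diag (gram N) 0 i.
Proof.
have := congr1 (fun B : 'M[C]_m => B i i) (diag_spectral_diag (gram_normalmx N)).
have PU := spectral_unitarymx (gram N).
set P := spectralmx (gram N) in PU *.
rewrite mxE eqxx mulr1n /= => ->.
rewrite invmx_unitary // /gram !mulmxA -mulmxA.
have -> : N ^t* *m P ^t* = (P *m N) ^t* by rewrite trmx_mul map_mxM.
by rewrite mxE; apply: sumr_ge0 => j _; rewrite !mxE mul_conjC_ge0.
Qed.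

Section ComplexReal.
Variable R : rcfType.
Local Notation C := R[i].

Lemma Re_sum (I : finType) (F : I -> C) :
  complex.Re (\sum_i F i) = \sum_i complex.Re (F i).
Proof. exact: (raddf_sum (@complex.Re R)). Qed.

Lemma Re_conj (z : C) : complex.Re z^* = complex.Re z.
Proof. by case: z. Qed.

Lemma ge0_complex_real (x : C) : 0 <= x -> x = (complex.Re x)%:C%C.
Proof. by move=> x_ge0; rewrite RRe_real // ger0_real. Qed.

Lemma Re_ge0 (x : C) : 0 <= x -> 0 <= complex.Re x.
Proof. by move=> x_ge0; rewrite -ler0c -ge0_complex_real. Qed.

Lemma ReM_ge0 (x y : C) : 0 <= x -> 0 <= y ->
  complex.Re (x * y) = complex.Re x * complex.Re y.
Proof.
by move=> /ge0_complex_real -> /ge0_complex_real ->; rewrite -rmorphM.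
Qed.

Lemma sqrtC_complex_real (r : R) : 0 <= r -> sqrtC r%:C%C = (Num.sqrt r)%:C%C.
Proof.
by move=> r_ge0; rewrite -{1}(sqr_sqrtr r_ge0) rmorphXn sqrCK // ler0c sqrtr_ge0.
Qed.

Lemma Re_sqrtC_mul (x y : C) : 0 <= x -> 0 <= y ->
  complex.Re (sqrtC (x * y)) = Num.sqrt (complex.Re x) * Num.sqrt (complex.Re y).
Proof.
move=> x_ge0 y_ge0; rewrite (ge0_complex_real x_ge0) (ge0_complex_real y_ge0) -rmorphM.
by rewrite sqrtC_complex_real ?mulr_ge0 ?Re_ge0 //= sqrtrM ?Re_ge0.
Qed.

End ComplexReal.

Lemma trace_norm_spectral (R : realType) n (S : 'M[R[i]]_n) :
  trace_norm S =
  \sum_i complex.Re (sqrtC (spectral_diag (S ^t* *m S) 0 i)).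
Proof.
rewrite /trace_norm /psd_sqrt mxtrace_mulC mulmxA mulmxV ?spectral_unit // mul1mx.
by rewrite mxtrace_diag Re_sum; apply: eq_bigr => i _; rewrite mxE.
Qed.

Section SumSqrt.
Variable R : rcfType.

Definition prob_purity (I : finType) (s : I -> R) (p : R) :=
  [/\ forall i, 0 <= s i, \sum_i s i = 1 & \sum_i s i ^+ 2 = p].

Definition linear_entropy_bound (p : R) := 1 + Num.sqrt (2 * (1 - p)).

Definition offdiag (I : finType) (a : I -> R) (q : I * I) :=
  if q.1 == q.2 then 0 else a q.1 * a q.2.

Lemma sqr_sum_offdiag (I : finType) (a : I -> R) :
  (\sum_i a i) ^+ 2 = \sum_i a i ^+ 2 + \sum_q offdiag a q.
Proof.
rewrite expr2 big_distrlr /= -(pair_bigA _ (fun i j => offdiag a (i, j))) -big_split /=.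
apply: eq_bigr => i _; rewrite (bigD1 i) //= [in RHS](bigD1 i) //= /offdiag eqxx add0r expr2.
by congr (_ + _); apply: eq_bigr => j /negPf; rewrite eq_sym /= => ->.
Qed.

Lemma sqr_sum_sym (I : finType) (w : I * I -> R) :
  (forall x y, w (x, y) = w (y, x)) -> (forall x, w (x, x) = 0) ->
  (\sum_q w q) ^+ 2 = 2 * \sum_q w q ^+ 2 +
    \sum_q w q * \sum_(q' | (q' != q) && (q' != (q.2, q.1))) w q'.
Proof.
move=> w_sym w_diag.
rewrite expr2 big_distrl mulr_sumr -big_split /=; apply: eq_bigr => -[x y] _ /=.
have [<-|nxy] := eqVneq x y; first by rewrite w_diag; ring.
rewrite (bigD1 (x, y)) //= (bigD1 (y, x)) /=; last first.
  by rewrite xpair_eqE negb_and eq_sym nxy.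
rewrite -w_sym; ring.
Qed.

Variables (I : finType) (s : I -> R) (p : R).
Hypothesis s_prob : prob_purity s p.

Let a i := Num.sqrt (s i).
Let w := offdiag a.

Let s_ge0 i : 0 <= s i. Proof. by case: s_prob. Qed.

Let a_sqr i : a i ^+ 2 = s i. Proof. exact: sqr_sqrtr. Qed.

Let w_ge0 q : 0 <= w q.
Proof. by rewrite /w /offdiag; case: eqP => _ //; rewrite mulr_ge0 ?sqrtr_ge0. Qed.

Let w_sym x y : w (x, y) = w (y, x).
Proof. by rewrite /w /offdiag /= eq_sym; case: eqP => // _; rewrite mulrC. Qed.

Let w_diag x : w (x, x) = 0.
Proof. by rewrite /w /offdiag eqxx. Qed.

Let sum_w_ge0 : 0 <= \sum_q w q.
Proof. exact: sumr_ge0. Qed.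

Let sum_sqrt_sqr : (\sum_i a i) ^+ 2 = 1 + \sum_q w q.
Proof. by rewrite sqr_sum_offdiag; case: s_prob => _ <- _; under eq_bigr do rewrite a_sqr. Qed.

Let sum_w_sqr : \sum_q w q ^+ 2 = 1 - p.
Proof.
case: s_prob => _ s1 s2; have := sqr_sum_offdiag s; rewrite s1 s2 expr1n => ->.
rewrite addrC addKr; apply: eq_bigr => q _.
by rewrite /w /offdiag; case: eqP => _; rewrite ?expr0n // exprMn !a_sqr.
Qed.

Lemma sum_sqrt_sqr_ge : linear_entropy_bound p <= (\sum_i Num.sqrt (s i)) ^+ 2.
Proof.
rewrite sum_sqrt_sqr lerD2l -sum_w_sqr -(ger0_norm sum_w_ge0) -sqrtr_sqr.
apply: ler_wsqrtr; rewrite (sqr_sum_sym w_sym w_diag) lerDl.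
by apply: sumr_ge0 => q _; rewrite mulr_ge0 ?sumr_ge0.
Qed.

Let w_support q : w q != 0 -> [/\ q.1 != q.2, s q.1 != 0 & s q.2 != 0].
Proof.
rewrite /w /offdiag; have [->|nq] := eqVneq q.1 q.2; first by rewrite eqxx.
rewrite mulf_eq0 negb_or /a !sqrtr_eq0 -!ltNge => /andP[/gt_eqF s1 /gt_eqF s2].
by split; rewrite ?s1 ?s2.
Qed.

Lemma sum_sqrt_sqr_support2 : (#|[set i | s i != 0%R]| <= 2)%N ->
  (\sum_i Num.sqrt (s i)) ^+ 2 = linear_entropy_bound p.
Proof.
set S := [set i | s i != 0] => S_le2.
(* Every nonzero w q lives on the pair {(x, y), (y, x)} spanned by S. *)
suff rest0 q : w q * \sum_(q' | (q' != q) && (q' != (q.2, q.1))) w q' = 0.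
  rewrite sum_sqrt_sqr /linear_entropy_bound -sum_w_sqr; congr (_ + _).
  rewrite -(ger0_norm sum_w_ge0) -sqrtr_sqr (sqr_sum_sym w_sym w_diag).
  by rewrite [X in _ + X]big1 ?addr0 // => q' _; apply: rest0.
have [->|/w_support [/= nxy sx sy]] := eqVneq (w q) 0; first by rewrite mul0r.
have qS : [set q.1; q.2] \subset S.
  by apply/subsetP => z; rewrite !inE => /orP[] /eqP ->; rewrite ?sx ?sy.
have S_eq : [set q.1; q.2] =i S.
  apply/subset_cardP => //; apply/eqP; rewrite eqn_leq subset_leq_card //=.
  by rewrite cards2 nxy.
rewrite big1 ?mulr0 // => -[u v] /andP[]; case: q nxy sx sy qS S_eq => x y /= nxy _ _ _ S_eq.
move=> nuv_xy nuv_yx; apply/eqP; apply: contraT => /w_support [/= nuv su sv].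
have := S_eq u; have := S_eq v; rewrite !inE su sv /=.
by move=> /orP[]/eqP ev /orP[]/eqP eu; subst u v; rewrite ?eqxx in nuv nuv_xy nuv_yx.
Qed.

End SumSqrt.

Section Bounds.
Variable R : rcfType.

Lemma sqrtrD_le (x y : R) : Num.sqrt (x + y) <= Num.sqrt x + Num.sqrt y.
Proof.
have [x_le0|x_gt0] := lerP x 0.
  by rewrite (ler0_sqrtr x_le0) add0r; apply: ler_wsqrtr; lra.
have [y_le0|y_gt0] := lerP y 0.
  by rewrite (ler0_sqrtr y_le0) addr0; apply: ler_wsqrtr; lra.
have sx := sqr_sqrtr (ltW x_gt0); have sy := sqr_sqrtr (ltW y_gt0).
have gx := sqrtr_ge0 x; have gy := sqrtr_ge0 y.
have : x + y <= (Num.sqrt x + Num.sqrt y) ^+ 2 by rewrite -{1}sx -{1}sy; nra.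
move/ler_wsqrtr/le_trans; apply; rewrite sqrtr_sqr ger0_norm //; lra.
Qed.

Lemma linear_entropy_bound_ge1 (p : R) : 1 <= linear_entropy_bound p.
Proof. by rewrite lerDl sqrtr_ge0. Qed.

Lemma linear_entropy_bound_submul (p1 p2 p3 : R) : p2 + p3 <= 1 + p1 ->
  linear_entropy_bound p1 <= linear_entropy_bound p2 * linear_entropy_bound p3.
Proof.
rewrite /linear_entropy_bound => hp.
have := sqrtr_ge0 (2 * (1 - p2)); have := sqrtr_ge0 (2 * (1 - p3)).
have : Num.sqrt (2 * (1 - p1)) <= Num.sqrt (2 * (1 - p2)) + Num.sqrt (2 * (1 - p3)).
  by apply: le_trans (sqrtrD_le _ _); apply: ler_wsqrtr; lra.
nra.
Qed.

Lemma ler_mul_of_sqr (c x y : R) : 0 <= c -> 0 <= x -> 0 <= y ->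
  c <= x ^+ 2 -> c <= y ^+ 2 -> c <= x * y.
Proof.
move=> c_ge0 x_ge0 y_ge0 cx cy.
have sqrt_le z : 0 <= z -> c <= z ^+ 2 -> Num.sqrt c <= z.
  by move=> z_ge0 cz; rewrite -(ger0_norm z_ge0) -sqrtr_sqr ler_wsqrtr.
by rewrite -[c](sqr_sqrtr c_ge0) expr2 ler_pM ?sqrtr_ge0 ?sqrt_le.
Qed.

Lemma mul_eq_of_sqr (c x y : R) : 0 <= x -> 0 <= y ->
  x ^+ 2 = c -> y ^+ 2 = c -> x * y = c.
Proof.
move=> x_ge0 y_ge0 <- /eqP; rewrite eq_sym eqrXn2 // => /eqP <-.
by rewrite expr2.
Qed.

End Bounds.

Lemma log2M (R : realType) (x y : R) : 0 < x -> 0 < y ->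
  log2 (x * y) = log2 x + log2 y.
Proof. by move=> x_gt0 y_gt0; rewrite /log2 lnM ?posrE // mulrDl. Qed.

Lemma ler_log2 (R : realType) (x y : R) : 0 < x -> x <= y -> log2 x <= log2 y.
Proof.
move=> x_gt0 xy; have y_gt0 := lt_le_trans x_gt0 xy.
by rewrite /log2 ler_pM2r ?invr_gt0 ?ln_gt0 ?ltr1n // ler_ln ?posrE.
Qed.

Lemma prob_purity_spectral_gram (R : rcfType) m n (N : 'M[R[i]]_(m, n)) (p : R[i]) :
  \tr (gram N) = 1 -> \tr (gram N *m gram N) = p ->
  prob_purity (fun i => complex.Re (spectral_diag (gram N) 0 i)) (complex.Re p).
Proof.
move=> tr1 tr2; have d_ge0 := spectral_diag_gram_ge0 N; split.
- by move=> i; apply: Re_ge0.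
- by rewrite -Re_sum sum_spectral_diag ?gram_normalmx // tr1.
- rewrite -tr2 -sum_spectral_diag_sqr ?gram_normalmx // Re_sum.
  by apply: eq_bigr => i _; rewrite !expr2 ReM_ge0.
Qed.

Section Bipartite.
Variables (R : realType) (X Y : finType) (M : X -> Y -> R[i]).
Local Notation C := R[i].
Local Notation K := (ptranspose_fst (pure_dm (fun p : X * Y => M p.1 p.2))).

(* Row y, column x holds M x y: gram amplmx is the reduced density matrix of Y
   and gram (amplmx ^t* ) the transpose of that of X. *)
Definition amplmx : 'M[C]_(#|{: Y}|, #|{: X}|) :=
  \matrix_(i, j) M (enum_val j) (enum_val i).

Definition purity : C :=
  \sum_x \sum_x' \sum_y \sum_y' M x y * (M x' y)^* * M x' y' * (M x y')^*.

Lemma entry_gram_amplmx y y' :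
  entry (gram amplmx) y y' = \sum_x M x y * (M x y')^*.
Proof.
rewrite /entry !mxE -[RHS]sum_enum_val; apply: eq_bigr => j _.
by rewrite !mxE !enum_rankK.
Qed.

Lemma entry_gram_adj_amplmx x x' :
  entry (gram (amplmx ^t*)) x x' = \sum_y (M x y)^* * M x' y.
Proof.
rewrite /entry !mxE -[RHS]sum_enum_val; apply: eq_bigr => j _.
by rewrite !mxE !enum_rankK conjCK.
Qed.

Lemma ptranspose_pure_dm : K = mx_of (fun p q : X * Y => M q.1 p.2 * (M p.1 q.2)^*).
Proof. by apply: eq_mx_of => p q; rewrite /pure_dm entry_mx_of. Qed.

Lemma adjmx_mul_ptranspose : K ^t* *m K = kronmx (gram (amplmx ^t*)) (gram amplmx).
Proof.
rewrite ptranspose_pure_dm adj_mx_of mul_mx_of; apply: eq_mx_of => p q.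
rewrite entry_gram_adj_amplmx entry_gram_amplmx big_distrlr /= exchange_big pair_bigA /=.
by apply: eq_bigr => r _; rewrite rmorphM /= conjCK; ring.
Qed.

Lemma trace_norm_ptranspose :
  trace_norm K =
  (\sum_i Num.sqrt (complex.Re (spectral_diag (gram (amplmx ^t*)) 0 i))) *
  (\sum_j Num.sqrt (complex.Re (spectral_diag (gram amplmx) 0 j))).
Proof.
set A := gram (amplmx ^t*); set B := gram amplmx.
have /orthomx_spectralP eA := gram_normalmx (amplmx ^t*).
have /orthomx_spectralP eB := gram_normalmx amplmx.
have /orthomx_spectralP eKK : K ^t* *m K \is normalmx.
  by have := gram_normalmx (K ^t*); rewrite /gram trmxCK.
pose e : 'rV[C]_#|{: X * Y}| :=
  \row_i (spectral_diag A 0 (enum_rank (enum_val i).1) *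
          spectral_diag B 0 (enum_rank (enum_val i).2)).
have KK_similar : K ^t* *m K = kronmx (invmx (spectralmx A)) (invmx (spectralmx B)) *m
    diag_mx e *m kronmx (spectralmx A) (spectralmx B).
  by rewrite -kronmx_diag !mul_kronmx -eA -eB adjmx_mul_ptranspose.
rewrite trace_norm_spectral.
rewrite (sum_similar_diag (fun z => complex.Re (sqrtC z)) _ _ (etrans (esym eKK) KK_similar));
  last 2 first.
- by rewrite mulVmx ?spectral_unit.
- by rewrite mul_kronmx !mulVmx ?spectral_unit // kronmx1.
under eq_bigr do rewrite mxE.
pose f x y := complex.Re (sqrtC
  (spectral_diag A 0 (enum_rank x) * spectral_diag B 0 (enum_rank y))).
rewrite (sum_enum_val (fun p : X * Y => f p.1 p.2)) -(pair_bigA _ f) big_distrlr /=.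
rewrite -sum_enum_rank; apply: eq_bigr => x _; rewrite -sum_enum_rank; apply: eq_bigr => y _.
by rewrite /f Re_sqrtC_mul // spectral_diag_gram_ge0.
Qed.

Lemma mxtrace_gram_amplmx_sqr : \tr (gram amplmx *m gram amplmx) = purity.
Proof.
rewrite mxtrace_mulmx_entry /purity.
under eq_bigr do under eq_bigr do rewrite !entry_gram_amplmx big_distrlr /=.
under eq_bigr do rewrite exchange_big /=.
rewrite exchange_big /=; apply: eq_bigr => x _.
under eq_bigr do rewrite exchange_big /=.
rewrite exchange_big /=; apply: eq_bigr => x' _.
by apply: eq_bigr => y _; apply: eq_bigr => y' _; ring.
Qed.

Lemma mxtrace_gram_adj_amplmx_sqr :
  \tr (gram (amplmx ^t*) *m gram (amplmx ^t*)) = purity^*.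
Proof.
rewrite mxtrace_mulmx_entry /purity rmorph_sum; apply: eq_bigr => x _.
rewrite rmorph_sum; apply: eq_bigr => x' _.
rewrite !entry_gram_adj_amplmx big_distrlr rmorph_sum; apply: eq_bigr => y _.
rewrite rmorph_sum; apply: eq_bigr => y' _.
by rewrite !rmorphM /= !conjCK; ring.
Qed.

Hypothesis M_normed : \sum_x \sum_y `|M x y| ^+ 2 = 1.

Lemma mxtrace_gram_amplmx : \tr (gram amplmx) = 1.
Proof.
rewrite -(mx_of_entry (gram amplmx)) mxtrace_mx_of -M_normed exchange_big.
by apply: eq_bigr => y _; rewrite entry_gram_amplmx; apply: eq_bigr => x _; rewrite normCK.
Qed.

Lemma mxtrace_gram_adj_amplmx : \tr (gram (amplmx ^t*)) = 1.
Proof.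
rewrite -(mx_of_entry (gram (amplmx ^t*))) mxtrace_mx_of -M_normed.
apply: eq_bigr => x _; rewrite entry_gram_adj_amplmx.
by apply: eq_bigr => y _; rewrite normCK mulrC.
Qed.

Let fst_prob :
  prob_purity (fun i => complex.Re (spectral_diag (gram (amplmx ^t*)) 0 i))
    (complex.Re purity).
Proof.
have := prob_purity_spectral_gram mxtrace_gram_adj_amplmx mxtrace_gram_adj_amplmx_sqr.
by rewrite Re_conj.
Qed.

Let snd_prob :
  prob_purity (fun j => complex.Re (spectral_diag (gram amplmx) 0 j)) (complex.Re purity).
Proof. exact: prob_purity_spectral_gram mxtrace_gram_amplmx mxtrace_gram_amplmx_sqr. Qed.

Let sum_sqrt_ge0 n (s : 'I_n -> R) : 0 <= \sum_i Num.sqrt (s i).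
Proof. by apply: sumr_ge0 => i _; apply: sqrtr_ge0. Qed.

Lemma trace_norm_ptranspose_ge : linear_entropy_bound (complex.Re purity) <= trace_norm K.
Proof.
rewrite trace_norm_ptranspose; apply: ler_mul_of_sqr; rewrite ?sum_sqrt_ge0 //.
- exact: le_trans ler01 (linear_entropy_bound_ge1 _).
- exact: sum_sqrt_sqr_ge fst_prob.
- exact: sum_sqrt_sqr_ge snd_prob.
Qed.

Lemma trace_norm_ptranspose_qubit : (#|{: X}| <= 2)%N ->
  trace_norm K = linear_entropy_bound (complex.Re purity).
Proof.
move=> X_le2; rewrite trace_norm_ptranspose; apply: mul_eq_of_sqr; rewrite ?sum_sqrt_ge0 //.
- apply: sum_sqrt_sqr_support2 fst_prob _.
  by rewrite (leq_trans (max_card _)) // card_ord.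
- apply: sum_sqrt_sqr_support2 snd_prob _; apply: leq_trans X_le2.
  apply: (@leq_trans #|[set j | spectral_diag (gram amplmx) 0 j != 0]|).
    by apply/subset_leq_card/subsetP => j; rewrite !inE; apply: contra => /eqP ->.
  apply: (leq_trans (card_spectral_support (gram_normalmx amplmx))).
  exact: leq_trans (mxrankM_maxl _ _) (rank_leq_col _).
Qed.

End Bipartite.

Lemma sum_mul_conj_antiinvariant (R : rcfType) (T : finType) (sigma : T -> T)
    (F G : T -> R[i]) :
  involutive sigma -> (forall q, G (sigma q) = - G q) ->
  \sum_q F (sigma q) * (G q)^* = - \sum_q F q * (G q)^*.
Proof.
move=> sigmaK G_anti; rewrite (reindex_inj (inv_inj sigmaK)) /= -sumrN.
by apply: eq_bigr => q _; rewrite sigmaK G_anti rmorphN mulrN.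
Qed.

Lemma reindex_can2 (V : nmodType) (I J : finType) (h : J -> I) (g : I -> J) (F : I -> V) :
  cancel h g -> cancel g h -> \sum_i F i = \sum_j F (h j).
Proof. by move=> hK gK; rewrite (reindex h) //; exists g => ? ?. Qed.

Lemma sum4_pair (V : nmodType) (X Y : finType) (F : X -> X -> Y -> Y -> V) :
  \sum_x \sum_x' \sum_y \sum_y' F x x' y y' =
  \sum_(z : (X * X) * (Y * Y)) F z.1.1 z.1.2 z.2.1 z.2.2.
Proof.
under eq_bigr do under eq_bigr do rewrite pair_bigA.
by rewrite pair_bigA pair_bigA.
Qed.

Section Tripartite.
Variables (R : realType) (TA TB TC : finType) (psi : TA -> TB -> TC -> R[i]).
Local Notation C := R[i].
Local Notation T := ((TA * TB) * TC)%type.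

Definition split_A (a : TA) (y : TC * TB) := psi a y.2 y.1.
Definition split_AC (x : TA * TC) (b : TB) := psi x.1 b x.2.
Definition split_AB (x : TA * TB) (c : TC) := psi x.1 x.2 c.

Definition psi2 (q : T * T) := psi q.1.1.1 q.1.1.2 q.1.2 * psi q.2.1.1 q.2.1.2 q.2.2.

Definition swap_B (q : T * T) : T * T :=
  (((q.1.1.1, q.2.1.2), q.1.2), ((q.2.1.1, q.1.1.2), q.2.2)).
Definition swap_C (q : T * T) : T * T :=
  (((q.1.1.1, q.1.1.2), q.2.2), ((q.2.1.1, q.2.1.2), q.1.2)).

(* (1 - F_B)(1 - F_C) applied to psi (x) psi. *)
Definition antisym_BC q :=
  psi2 q - psi2 (swap_B q) - psi2 (swap_C q) + psi2 (swap_B (swap_C q)).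

Lemma swap_BK : involutive swap_B. Proof. by case=> [[[a b] c] [[a' b'] c']]. Qed.
Lemma swap_CK : involutive swap_C. Proof. by case=> [[[a b] c] [[a' b'] c']]. Qed.

Lemma antisym_BC_swap_B q : antisym_BC (swap_B q) = - antisym_BC q.
Proof. by case: q => [[[a b] c] [[a' b'] c']]; rewrite /antisym_BC /psi2 /=; ring. Qed.

Lemma antisym_BC_swap_C q : antisym_BC (swap_C q) = - antisym_BC q.
Proof. by case: q => [[[a b] c] [[a' b'] c']]; rewrite /antisym_BC /psi2 /=; ring. Qed.

Lemma sum_antisym_BC_sqr :
  \sum_q antisym_BC q * (antisym_BC q)^* = 4 * \sum_q psi2 q * (antisym_BC q)^*.
Proof.
have antiB := sum_mul_conj_antiinvariant _ swap_BK antisym_BC_swap_B.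
have antiC := sum_mul_conj_antiinvariant _ swap_CK antisym_BC_swap_C.
transitivity (\sum_q psi2 q * (antisym_BC q)^* - \sum_q psi2 (swap_B q) * (antisym_BC q)^*
   - \sum_q psi2 (swap_C q) * (antisym_BC q)^*
   + \sum_q psi2 (swap_B (swap_C q)) * (antisym_BC q)^*).
  by rewrite -!sumrB -big_split /=; apply: eq_bigr => q _; rewrite /antisym_BC; ring.
rewrite (antiC (psi2 \o swap_B)) antiB antiC opprK; ring.
Qed.

Lemma sum_psi2_mul_conj_antisym_BC : \sum_q psi2 q * (antisym_BC q)^* =
  \sum_q psi2 q * (psi2 q)^* - \sum_q psi2 q * (psi2 (swap_B q))^*
  - \sum_q psi2 q * (psi2 (swap_C q))^* + \sum_q psi2 q * (psi2 (swap_B (swap_C q)))^*.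
Proof.
rewrite -!sumrB -big_split /=; apply: eq_bigr => q _.
by rewrite /antisym_BC !rmorphD !rmorphN /=; ring.
Qed.

Lemma purity_split_A : purity split_A = \sum_q psi2 q * (psi2 (swap_B (swap_C q)))^*.
Proof.
rewrite /purity sum4_pair (@reindex_can2 _ _ _
  (fun q : T * T => ((q.1.1.1, q.2.1.1), ((q.1.2, q.1.1.2), (q.2.2, q.2.1.2))))
  (fun z => (((z.1.1, z.2.1.2), z.2.1.1), ((z.1.2, z.2.2.2), z.2.2.1)))); last 2 first.
- by case=> [[[a b] c] [[a' b'] c']].
- by case=> [[a a'] [[c b] [c' b']]].
apply: eq_bigr => -[[[a b] c] [[a' b'] c']] _.
by rewrite /psi2 /split_A /= !rmorphM /=; ring.
Qed.

Lemma purity_split_AC : purity split_AC = \sum_q psi2 q * (psi2 (swap_B q))^*.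
Proof.
rewrite /purity sum4_pair (@reindex_can2 _ _ _
  (fun q : T * T => (((q.1.1.1, q.1.2), (q.2.1.1, q.2.2)), (q.1.1.2, q.2.1.2)))
  (fun z => (((z.1.1.1, z.2.1), z.1.1.2), ((z.1.2.1, z.2.2), z.1.2.2)))); last 2 first.
- by case=> [[[a b] c] [[a' b'] c']].
- by case=> [[[a c] [a' c']] [b b']].
apply: eq_bigr => -[[[a b] c] [[a' b'] c']] _.
by rewrite /psi2 /split_AC /= !rmorphM /=; ring.
Qed.

Lemma purity_split_AB : purity split_AB = \sum_q psi2 q * (psi2 (swap_C q))^*.
Proof.
rewrite /purity sum4_pair (@reindex_can2 _ _ _
  (fun q : T * T => ((q.1.1, q.2.1), (q.1.2, q.2.2)))
  (fun z => ((z.1.1, z.2.1), (z.1.2, z.2.2)))); last 2 first.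
- by case=> [[[a b] c] [[a' b'] c']].
- by case=> [[[a b] [a' b']] [c c']].
apply: eq_bigr => -[[[a b] c] [[a' b'] c']] _.
by rewrite /psi2 /split_AB /= !rmorphM /=; ring.
Qed.

Hypothesis psi_normed : \sum_a \sum_b \sum_c `|psi a b c| ^+ 2 = 1.

Lemma split_A_normed : \sum_x \sum_y `|split_A x y| ^+ 2 = 1.
Proof. by rewrite -psi_normed; apply: eq_bigr => a _; rewrite exchange_big pair_bigA. Qed.

Lemma split_AC_normed : \sum_x \sum_y `|split_AC x y| ^+ 2 = 1.
Proof.
rewrite -psi_normed; under [RHS]eq_bigr do rewrite exchange_big.
by rewrite [RHS]pair_bigA.
Qed.

Lemma split_AB_normed : \sum_x \sum_y `|split_AB x y| ^+ 2 = 1.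
Proof. by rewrite -psi_normed [RHS]pair_bigA. Qed.

Lemma sum_psi2_sqr : \sum_q psi2 q * (psi2 q)^* = 1.
Proof.
have psi_sqr : \sum_(x : T) psi x.1.1 x.1.2 x.2 * (psi x.1.1 x.1.2 x.2)^* = 1.
  by rewrite -psi_normed !pair_bigA; apply: eq_bigr => x _; rewrite normCK.
rewrite -[RHS](mulr1 1) -[X in X * _]psi_sqr -[X in _ * X]psi_sqr big_distrlr /= pair_bigA.
by apply: eq_bigr => q _; rewrite /psi2 rmorphM /=; ring.
Qed.

Lemma purity_split_le :
  complex.Re (purity split_AC) + complex.Re (purity split_AB) <=
  1 + complex.Re (purity split_A).
Proof.
have : 0 <= \sum_q antisym_BC q * (antisym_BC q)^*.
  by apply: sumr_ge0 => q _; apply: mul_conjC_ge0.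
rewrite sum_antisym_BC_sqr sum_psi2_mul_conj_antisym_BC sum_psi2_sqr.
rewrite -purity_split_A -purity_split_AC -purity_split_AB pmulr_rge0 // => /Re_ge0.
rewrite !(raddfD, raddfB) /=; lra.
Qed.

End Tripartite.


Unset Implicit Arguments.
Theorem theorem2 (R : realType) (m n : nat)
    (psi : 'I_2 -> 'I_m -> 'I_n -> R[i])
    (hnorm : \sum_(a < 2) \sum_(b < m) \sum_(c < n) `|psi a b c| ^+ 2 = 1) :
  log_negativity
      (pure_dm (fun p : 'I_2 * ('I_n * 'I_m) => psi p.1 p.2.2 p.2.1))
  - log_negativity
      (pure_dm (fun p : ('I_2 * 'I_n) * 'I_m => psi p.1.1 p.2 p.1.2))
  <= log_negativity
      (pure_dm (fun p : ('I_2 * 'I_m) * 'I_n => psi p.1.1 p.1.2 p.2)).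
Proof.
have bound_gt0 (p : R) : 0 < linear_entropy_bound p.
  exact: lt_le_trans ltr01 (linear_entropy_bound_ge1 p).
have tn_A := trace_norm_ptranspose_qubit (split_A_normed hnorm) (eq_leq (card_ord 2)).
have tn_AC := trace_norm_ptranspose_ge (split_AC_normed hnorm).
have tn_AB := trace_norm_ptranspose_ge (split_AB_normed hnorm).
rewrite /log_negativity lerBlDr -log2M; last 2 first.
- exact: lt_le_trans (bound_gt0 _) tn_AB.
- exact: lt_le_trans (bound_gt0 _) tn_AC.
rewrite tn_A; apply: ler_log2 => //.
rewrite (le_trans (linear_entropy_bound_submul (purity_split_le hnorm))) // mulrC.
by rewrite ler_pM // ltW.
Qed.
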